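(* Let $\mathbb{D}=\{z\in\mathbb{C}:|z|<1\}$. For all $z_1,z_2\in\mathbb{D}$, \[ s_{\mathbb{D}}(z_1,z_2)\le \frac{|z_1-z_2|}{2-|z_1+z_2|}, \] and equality holds if and only if the points $z_1,0,z_2$ are collinear.
   Context: The triangular ratio metric of $\mathbb{D}$ is $s_{\mathbb{D}}(z_1,z_2)=\sup_{z\in\partial\mathbb{D}}\frac{|z_1-z_2|}{|z_1-z|+|z-z_2|}$. *)

From Stdlib Require Import Reals.
From Coquelicot Require Import Coquelicot.
Open Scope R_scope.

Definition in_unit_disk (z : C) : Prop := Cmod z < 1.

Definition s_D (z1 z2 : C) : Rbar :=
  Lub_Rbar (fun t : R => exists z : C, Cmod z = 1 /\
              t = Cmod (z1 - z2) / (Cmod (z1 - z) + Cmod (z - z2))).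

(* z1, 0, z2 are collinear (lie on a common real line) iff
   Im(z1 * conj z2) = 0, i.e. det(z1, z2) = 0. *)
Definition collinear3 (a b c : C) : Prop :=
  snd ((b - a) * Cconj (c - a))%C = 0.

From Stdlib Require Import Reals Lra.
From Coquelicot Require Import Coquelicot.
Open Scope R_scope.

(* For z on the unit circle, two triangle inequalities give
   |z1 - z| + |z - z2| >= |2z - (z1 + z2)| >= |2z| - |z1 + z2| = 2 - |z1 + z2|,
   whence the bound.  If z1, 0, z2 lie on a line, the unit vector of that line
   pointing along z1 + z2 turns both inequalities into equalities, so the bound
   is attained.  Conversely the denominator attains its minimum on the compact
   circle; if the supremum equals the bound (and z1 <> z2) this minimum is
   2 - |z1 + z2|, and equality in both triangle inequalities forces z1 and z2
   onto the line through 0 and the minimiser. *)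

Definition cross (u v : C) : R := fst u * snd v - snd u * fst v.

Lemma collinear3_0 (z1 z2 : C) : collinear3 z1 0 z2 <-> cross z1 z2 = 0.
Proof.
  destruct z1 as [x1 y1], z2 as [x2 y2].
  unfold collinear3, cross, Cminus, Cmult, Cconj, Cplus, Copp, RtoC; simpl.
  split; intro H; nra.
Qed.

Lemma Cmod_sub_sym (u v : C) : Cmod (u - v) = Cmod (v - u).
Proof. rewrite <- Cmod_opp; f_equal; ring. Qed.

Lemma Cmod_scale_unit (a : R) (z : C) : Cmod z = 1 -> Cmod (a * z) = Rabs a.
Proof. intro hz; rewrite Cmod_mult, Cmod_R, hz; ring. Qed.

Lemma Cmod_add_eq_cross (u v : C) :
  Cmod (u + v) = Cmod u + Cmod v -> cross u v = 0.
Proof.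
  intro Heq.
  pose proof (Cmod2_alt u) as Hu; pose proof (Cmod2_alt v) as Hv.
  pose proof (Cmod2_alt (u + v)) as Huv.
  destruct u as [a b], v as [c d]; unfold cross, Re, Im in *; cbn [fst snd Cplus] in *.
  rewrite Heq in Huv.
  assert (Hdot : Cmod (a, b) * Cmod (c, d) = a * c + b * d) by nra.
  assert (Hlagrange : (a * d - b * c) ^ 2 = 0).
  { replace ((a * d - b * c) ^ 2)
      with ((a ^ 2 + b ^ 2) * (c ^ 2 + d ^ 2) - (a * c + b * d) ^ 2) by ring.
    rewrite <- Hu, <- Hv, <- Hdot; ring. }
  nra.
Qed.

Lemma Cmod_add_lt_2 (z1 z2 : C) : Cmod z1 < 1 -> Cmod z2 < 1 -> Cmod (z1 + z2) < 2.
Proof. pose proof (Cmod_triangle z1 z2); lra. Qed.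

Lemma Cmod_double_unit (z : C) : Cmod z = 1 -> Cmod (2 * z) = 2.
Proof. intro hz; rewrite (Cmod_scale_unit 2 z hz); apply Rabs_pos_eq; lra. Qed.

Lemma boundary_triangle_chain (z1 z2 z : C) :
  Cmod z = 1 ->
  Cmod (2 * z - (z1 + z2)) <= Cmod (z - z1) + Cmod (z - z2) /\
  2 <= Cmod (2 * z - (z1 + z2)) + Cmod (z1 + z2).
Proof.
  intro hz; split.
  - replace (2 * z - (z1 + z2))%C with (z - z1 + (z - z2))%C by ring.
    apply Cmod_triangle.
  - pose proof (Cmod_triangle (2 * z - (z1 + z2)) (z1 + z2)) as H.
    replace (2 * z - (z1 + z2) + (z1 + z2))%C with (2 * z)%C in H by ring.
    rewrite Cmod_double_unit in H by exact hz; exact H.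
Qed.

Lemma boundary_sum_ge (z1 z2 z : C) :
  Cmod z = 1 -> 2 - Cmod (z1 + z2) <= Cmod (z1 - z) + Cmod (z - z2).
Proof.
  intro hz; rewrite (Cmod_sub_sym z1 z).
  pose proof (boundary_triangle_chain z1 z2 z hz); lra.
Qed.

Lemma Cmod_unit_neq0 (z : C) : Cmod z = 1 -> z <> 0.
Proof. intros hz ->; rewrite Cmod_0 in hz; lra. Qed.

Lemma cross_eq0_multiple (u v : C) : u <> 0 -> cross u v = 0 -> exists a : R, v = (a * u)%C.
Proof.
  intros hu c.
  apply Cmod_gt_0 in hu; pose proof (Cmod2_alt u) as Hu.
  destruct u as [x y], v as [x' y']; unfold cross, Re, Im in *; cbn [fst snd] in *.
  assert (Hpos : 0 < x ^ 2 + y ^ 2) by (rewrite <- Hu; nra).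
  exists ((x * x' + y * y') / (x ^ 2 + y ^ 2)).
  assert (Ex : y * (x * y' - y * x') = 0) by (rewrite c; ring).
  assert (Ey : x * (x * y' - y * x') = 0) by (rewrite c; ring).
  apply injective_projections; cbn [fst snd Cmult RtoC]; field_simplify_eq; lra.
Qed.

Lemma cross_multiples (a b : R) (z : C) : cross (a * z) (b * z) = 0.
Proof. unfold cross; cbn [fst snd Cmult RtoC]; ring. Qed.

(* Writing z1 + z2 = t z, the last hypothesis becomes (2 - t) cross z z2 = 0,
   and t <= |z1 + z2| < 2. *)
Lemma collinear_of_aligned_unit (z z1 z2 : C) :
  Cmod z = 1 -> Cmod (z1 + z2) < 2 ->
  cross z (z1 + z2) = 0 -> cross (z - z1) (z - z2) = 0 -> cross z1 z2 = 0.
Proof.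
  intros hz hw c1 c2.
  pose proof (Cmod_unit_neq0 z hz) as z0.
  destruct (cross_eq0_multiple z (z1 + z2) z0 c1) as [t ht].
  assert (Ht : t < 2).
  { rewrite ht, (Cmod_scale_unit t z hz) in hw; pose proof (Rle_abs t); lra. }
  replace z1 with (t * z - z2)%C in * by (rewrite <- ht; ring).
  assert (c : cross z z2 = 0).
  { replace (cross (z - (t * z - z2)) (z - z2)) with (- (2 - t) * cross z z2) in c2
      by (unfold cross; cbn [fst snd Cmult Cplus Cminus Copp RtoC]; ring).
    apply Rmult_integral in c2 as [|]; lra. }
  destruct (cross_eq0_multiple z z2 z0 c) as [b ->].
  replace (t * z - b * z)%C with (RtoC (t - b) * z)%C by (rewrite RtoC_minus; ring).
  apply cross_multiples.
Qed.

Lemma collinear_of_boundary_sum_eq (z1 z2 z : C) :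
  Cmod z = 1 -> Cmod (z1 + z2) < 2 ->
  Cmod (z1 - z) + Cmod (z - z2) = 2 - Cmod (z1 + z2) -> cross z1 z2 = 0.
Proof.
  intros hz hw Heq.
  rewrite (Cmod_sub_sym z1 z) in Heq.
  destruct (boundary_triangle_chain z1 z2 z hz) as [H1 H2].
  apply (collinear_of_aligned_unit z); [exact hz | exact hw | |].
  - assert (c : cross (2 * z - (z1 + z2)) (z1 + z2) = 0).
    { apply Cmod_add_eq_cross.
      replace (2 * z - (z1 + z2) + (z1 + z2))%C with (2 * z)%C by ring.
      rewrite Cmod_double_unit by exact hz; lra. }
    revert c; unfold cross; cbn [fst snd Cmult Cplus Cminus Copp RtoC]; nra.
  - apply Cmod_add_eq_cross.
    replace (z - z1 + (z - z2))%C with (2 * z - (z1 + z2))%C by ring; lra.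
Qed.

Lemma unit_direction (u : C) : exists z, Cmod z = 1 /\ u = (Cmod u * z)%C.
Proof.
  destruct (Ceq_dec u 0) as [-> | hu].
  - exists 1; split; [apply Cmod_1 | rewrite Cmod_0; ring].
  - assert (hr : RtoC (Cmod u) <> 0)
      by (intro e; apply RtoC_inj in e; apply hu, Cmod_eq_0, e).
    exists (u / Cmod u)%C; split.
    + rewrite Cmod_div, Cmod_R, Rabs_pos_eq by (auto; apply Cmod_ge_0).
      apply Rinv_r; intro e; apply hr; rewrite e; reflexivity.
    + field; exact hr.
Qed.

Lemma collinear_unit_line (z1 z2 : C) :
  cross z1 z2 = 0 ->
  exists z (a b : R), Cmod z = 1 /\ z1 = (a * z)%C /\ z2 = (b * z)%C.
Proof.
  intro c.
  destruct (Ceq_dec z1 0) as [-> | h1].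
  - destruct (unit_direction z2) as [z [hz e2]].
    exists z, 0, (Cmod z2); repeat split; [exact hz | ring | exact e2].
  - destruct (unit_direction z1) as [z [hz e1]].
    destruct (cross_eq0_multiple z1 z2 h1 c) as [b e2].
    exists z, (Cmod z1), (b * Cmod z1); repeat split; [exact hz | exact e1 |].
    rewrite e2, RtoC_mult, e1 at 1; ring.
Qed.

Lemma boundary_sum_attains_bound (z1 z2 : C) :
  Cmod z1 < 1 -> Cmod z2 < 1 -> cross z1 z2 = 0 ->
  exists z, Cmod z = 1 /\ Cmod (z1 - z) + Cmod (z - z2) = 2 - Cmod (z1 + z2).
Proof.
  intros h1 h2 c.
  destruct (collinear_unit_line z1 z2 c) as [z [a [b [hz [-> ->]]]]].
  rewrite (Cmod_scale_unit a z hz) in h1; rewrite (Cmod_scale_unit b z hz) in h2.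
  replace (a * z + b * z)%C with (RtoC (a + b) * z)%C by (rewrite RtoC_plus; ring).
  rewrite (Cmod_scale_unit (a + b) z hz).
  destruct (Rle_or_lt 0 (a + b)) as [hab | hab]; [exists z | exists (- z)%C].
  - replace (a * z - z)%C with (RtoC (a - 1) * z)%C by (rewrite RtoC_minus; ring).
    replace (z - b * z)%C with (RtoC (1 - b) * z)%C by (rewrite RtoC_minus; ring).
    rewrite !(Cmod_scale_unit _ z hz); split; [exact hz | split_Rabs; lra].
  - replace (a * z - - z)%C with (RtoC (a + 1) * z)%C by (rewrite RtoC_plus; ring).
    replace (- z - b * z)%C with (RtoC (- 1 - b) * z)%C by (rewrite RtoC_minus; ring).
    rewrite Cmod_opp, !(Cmod_scale_unit _ z hz); split; [exact hz | split_Rabs; lra].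
Qed.

Lemma Cmod_cos_sin (t : R) : Cmod (cos t, sin t) = 1.
Proof.
  unfold Cmod; cbn [fst snd]; rewrite <- sqrt_1; f_equal.
  pose proof (sin2_cos2 t) as h; unfold Rsqr in h; lra.
Qed.

Lemma unit_circle_cos_sin (z : C) :
  Cmod z = 1 -> exists t, -PI <= t <= PI /\ z = (cos t, sin t).
Proof.
  intro hz; pose proof (Cmod2_alt z) as H; rewrite hz in H.
  destruct z as [p q]; unfold Re, Im in H; cbn [fst snd] in H.
  assert (hp : -1 <= p <= 1) by nra.
  assert (hs : sqrt (1 - p²) = Rabs q).
  { rewrite <- sqrt_Rsqr_abs; f_equal; unfold Rsqr; lra. }
  pose proof (acos_bound p).
  destruct (Rle_or_lt 0 q) as [hq | hq]; [exists (acos p) | exists (- acos p)].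
  - rewrite cos_acos, sin_acos, hs, Rabs_pos_eq by lra; split; [lra | reflexivity].
  - rewrite cos_neg, sin_neg, cos_acos, sin_acos, hs, Rabs_left by lra.
    split; [lra | f_equal; ring].
Qed.

Lemma unit_circle_min (f : C -> R) :
  (forall t, continuity_pt (fun t => f (cos t, sin t)) t) ->
  exists z0, Cmod z0 = 1 /\ forall z, Cmod z = 1 -> f z0 <= f z.
Proof.
  intro hf.
  destruct (continuity_ab_min (fun t => f (cos t, sin t)) (- PI) PI)
    as [m [hm _]]; [pose proof PI_RGT_0; lra | intros; apply hf |].
  exists (cos m, sin m); split; [apply Cmod_cos_sin |].
  intros z hz; destruct (unit_circle_cos_sin z hz) as [t [ht ->]].
  exact (hm t ht).
Qed.

Lemma continuity_pt_Cmod_sub_cos_sin (a : C) (t : R) :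
  continuity_pt (fun t => Cmod (a - (cos t, sin t))) t.
Proof.
  unfold Cmod; cbn [fst snd Cplus Cminus Copp]; reg.
  apply Rplus_le_le_0_compat; apply pow2_ge_0.
Qed.

Lemma s_D_le (z1 z2 : C) (m : R) :
  0 < m -> (forall z, Cmod z = 1 -> m <= Cmod (z1 - z) + Cmod (z - z2)) ->
  Rbar_le (s_D z1 z2) (Cmod (z1 - z2) / m).
Proof.
  intros hm hsum; apply Lub_Rbar_correct; intros t [z [hz ->]]; cbn.
  apply Rmult_le_compat_l; [apply Cmod_ge_0 |].
  apply Rinv_le_contravar; [exact hm | exact (hsum z hz)].
Qed.

Lemma s_D_ge (z1 z2 z : C) :
  Cmod z = 1 -> Rbar_le (Cmod (z1 - z2) / (Cmod (z1 - z) + Cmod (z - z2))) (s_D z1 z2).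
Proof. intro hz; apply Lub_Rbar_correct; exists z; split; [exact hz | reflexivity]. Qed.

Lemma s_D_le_bound (z1 z2 : C) :
  in_unit_disk z1 -> in_unit_disk z2 ->
  Rbar_le (s_D z1 z2) (Cmod (z1 - z2) / (2 - Cmod (z1 + z2))).
Proof.
  intros h1 h2; apply s_D_le; [pose proof (Cmod_add_lt_2 z1 z2 h1 h2); lra |].
  intros z hz; exact (boundary_sum_ge z1 z2 z hz).
Qed.

Lemma s_D_eq_bound_of_collinear (z1 z2 : C) :
  in_unit_disk z1 -> in_unit_disk z2 -> cross z1 z2 = 0 ->
  s_D z1 z2 = Cmod (z1 - z2) / (2 - Cmod (z1 + z2)).
Proof.
  intros h1 h2 c.
  destruct (boundary_sum_attains_bound z1 z2 h1 h2 c) as [z [hz E]].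
  apply Rbar_le_antisym; [exact (s_D_le_bound z1 z2 h1 h2) |].
  rewrite <- E; exact (s_D_ge z1 z2 z hz).
Qed.

Lemma collinear_of_s_D_eq_bound (z1 z2 : C) :
  in_unit_disk z1 -> in_unit_disk z2 ->
  s_D z1 z2 = Cmod (z1 - z2) / (2 - Cmod (z1 + z2)) -> cross z1 z2 = 0.
Proof.
  intros h1 h2 Heq.
  destruct (Ceq_dec z1 z2) as [-> | hne]; [unfold cross; ring |].
  assert (hM : 0 < Cmod (z1 - z2)).
  { apply Cmod_gt_0; intro e; apply hne.
    replace z1 with (z1 - z2 + z2)%C by ring; rewrite e; ring. }
  pose proof (Cmod_add_lt_2 z1 z2 h1 h2) as hw.
  destruct (unit_circle_min (fun z => Cmod (z1 - z) + Cmod (z - z2))) as [z0 [hz0 hmin]].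
  { intro t; apply continuity_pt_plus; [apply continuity_pt_Cmod_sub_cos_sin |].
    eapply continuity_pt_ext; [intro; apply Cmod_sub_sym | apply continuity_pt_Cmod_sub_cos_sin]. }
  destruct (Rle_lt_or_eq_dec _ _ (boundary_sum_ge z1 z2 z0 hz0)) as [hlt | heq].
  - pose proof (s_D_le z1 z2 (Cmod (z1 - z0) + Cmod (z0 - z2))) as U.
    rewrite Heq in U; cbn in U; specialize (U ltac:(lra) hmin).
    assert (Cmod (z1 - z2) / (Cmod (z1 - z0) + Cmod (z0 - z2))
            < Cmod (z1 - z2) / (2 - Cmod (z1 + z2))).
    { apply Rmult_lt_compat_l; [exact hM |]. apply Rinv_lt_contravar; [apply Rmult_lt_0_compat; lra | exact hlt]. }
    lra.
  - exact (collinear_of_boundary_sum_eq z1 z2 z0 hz0 hw (eq_sym heq)).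
Qed.

Theorem theorem2p2 (z1 z2 : C) :
  in_unit_disk z1 -> in_unit_disk z2 ->
  Rbar_le (s_D z1 z2) (Finite (Cmod (z1 - z2) / (2 - Cmod (z1 + z2)))) /\
  (s_D z1 z2 = Finite (Cmod (z1 - z2) / (2 - Cmod (z1 + z2))) <->
   collinear3 z1 0 z2).
Proof.
  intros h1 h2; rewrite collinear3_0; split.
  - exact (s_D_le_bound z1 z2 h1 h2).
  - split.
    + exact (collinear_of_s_D_eq_bound z1 z2 h1 h2).
    + exact (s_D_eq_bound_of_collinear z1 z2 h1 h2).
Qed.
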